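(* Let $l\ge1$. For all $\alpha,\beta\ge1$, $\widetilde\epsilon_{t^l}(\mathcal{Q}_{\alpha,\beta})\subset\mathcal{P}_{\alpha',\beta'}$, where $\alpha'=\alpha+(n-1)l\beta$ and $\beta'=\beta$.
   Context: Let $k$ be a field of characteristic zero, $n\ge3$, $k[t,\mathbf{x}]=k[t,x_1,\ldots,x_n]$. Let $\widetilde D=\sum_{j=1}^{n-1}(n-j)\,x_{j+1}\,\partial/\partial x_j$ as a derivation of $k[t,\mathbf{x}]$ killing $t$, and $\widetilde\epsilon_{t^l}=\exp(t^l\widetilde D)$, $\exp E(g)=\sum_{i\ge0}E^i(g)/i!$. For nonzero $p=\sum u_{i_0,\ldots,i_n}t^{i_0}x_1^{i_1}\cdots x_n^{i_n}$, $\mathrm{supp}(p)$ is the set of exponent vectors with nonzero coefficient, $\deg_{\mathbf w}(p)=\max\{\sum_j i_jw_j:(i_0,\ldots,i_n)\in\mathrm{supp}(p)\}$, and $\mathrm{lt}(p)$ is the leading term for the lexicographic order with $t>x_1>\cdots>x_n$. Let $\mathbf{w}_1=(1,\ldots,1)$, $\mathbf{w}_2$ the weight with $n-2$ on $t$ and $2n-j-1$ on $x_j$, and $\mathbf{w}_3$ the weight with $0$ on $t$ and $1$ on each $x_j$. For $\alpha,\beta\ge1$: $\mathcal{P}_{\alpha,\beta}$ is the set of nonzero $p$ with $\deg_{\mathbf{w}_1}(p)\le\alpha+\beta$, $\deg_{\mathbf{w}_2}(p)\le(n-2)\alpha+(n-1)\beta$ and $\mathrm{lt}(p)\in k^*t^\alpha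 x_n^\beta$; $\mathcal{Q}_{\alpha,\beta}$ is the set of nonzero $p$ with $\deg_{\mathbf{w}_3}(p)\le\beta$ and $\mathrm{lt}(p)\in k^*t^\alpha x_1^\beta$. *)

From HB Require Import structures.
From mathcomp Require Import all_boot all_order all_algebra.
From mathcomp Require Import mpoly.
Set Implicit Arguments. Unset Strict Implicit. Unset Printing Implicit Defensive.
Import Order.TTheory GRing.Theory Num.Theory.
Local Open Scope ring_scope.

(* Convention: k[t, x_1, ..., x_n] is {mpoly k[n.+1]}; variable 0 is t and
   variable j (1 <= j <= n) is x_j. *)

Section Defs.
Variables (k : fieldType) (n : nat).

Local Notation P := {mpoly k[n.+1]}.

Definition Dtilde (p : P) : P :=
  \sum_(j < n.+1 | (0 < j < n)%N)
     ((n - j)%:R * 'X_(inord j.+1) * mderiv j p).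

Definition tlD (l : nat) (p : P) : P := 'X_(ord0) ^+ l * Dtilde p.

(* exp(t^l D~)(p) = sum_{i>=0} (t^l D~)^i(p)/i!.  D~ is locally nilpotent:
   (t^l D~)^i(p) = 0 as soon as i > n * deg p, so the series is the finite
   sum below (the bound (msize p * n) exceeds n * deg p). *)
Definition eps_t (l : nat) (p : P) : P :=
  \sum_(i < (msize p * n).+1) ((i`!%:R)^-1 *: iter i (tlD l) p).

Definition wdeg (w : nat -> nat) (p : P) : nat :=
  \max_(m <- msupp p) (\sum_(i < n.+1) (m i * w i))%N.

Definition w1 (i : nat) : nat := 1.
Definition w2 (i : nat) : nat := if i == 0%N then (n - 2)%N else (2 * n - i - 1)%N.
Definition w3 (i : nat) : nat := if i == 0%N then 0%N else 1%N.

Definition lexlt (m1 m2 : 'X_{1..n.+1}) : Prop :=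
  exists i : 'I_n.+1, (forall j : 'I_n.+1, (j < i)%N -> m1 j = m2 j) /\ (m1 i < m2 i)%N.

Definition lt_is (p : P) (m0 : 'X_{1..n.+1}) : Prop :=
  m0 \in msupp p /\ forall m, m \in msupp p -> m <> m0 -> lexlt m m0.

Definition mon_t_x (a j b : nat) : 'X_{1..n.+1} :=
  [multinom (if i == 0%N :> nat then a else if i == j :> nat then b else 0%N) | i < n.+1].

Definition inPab (a b : nat) (p : P) : Prop :=
  [/\ p != 0,
      (wdeg w1 p <= a + b)%N,
      (wdeg w2 p <= (n - 2) * a + (n - 1) * b)%N &
      lt_is p (mon_t_x a n b)].

Definition inQab (a b : nat) (p : P) : Prop :=
  [/\ p != 0, (wdeg w3 p <= b)%N & lt_is p (mon_t_x a 1 b)].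

End Defs.

From HB Require Import structures.
From mathcomp Require Import all_boot all_order all_algebra.
From mathcomp Require Import mpoly.
From mathcomp Require Import zify.
Set Implicit Arguments. Unset Strict Implicit. Unset Printing Implicit Defensive.
Import Order.TTheory GRing.Theory Num.Theory.
Local Open Scope ring_scope.

(* To a monomial t^T x^e of k[t, x_1, ..., x_n] attach its t-degree T, its x-degree
   S = sum_j e_j and its x-weight W = sum_j j e_j; thus S <= W <= n S.  A move
   x_j -> x_(j+1) (0 < j < n), as performed by t^l D~, raises T by l, keeps S and
   raises W by 1.  Hence every monomial of exp(t^l D~) p arises from a monomial of
   p by some number i of moves, and i <= n S - W <= (n-1) S.
   For p in Q_(a,b) its monomials have T <= a, S <= b, and t^a x_1^b is the only one
   with T = a and S = W = b.  Arithmetic on (T, S, W, i) then gives the w1- and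
   w2-degree bounds and T <= a', with equality only for t^a' x_n^b, reached from
   t^a x_1^b by (n-1) b moves.  Finally the coefficients of (t^l D~)^i (t^a x_1^b) are
   natural numbers and, following a chain of moves, the one at t^a' x_n^b is
   positive, hence nonzero in characteristic zero: t^a' x_n^b is the leading term. *)

Section MonomialStatistics.
Variable n : nat.
Local Notation M := ('X_{1..n.+1}).
Implicit Types (m : M) (w : nat -> nat).

Definition mwt w m : nat := (\sum_(i < n.+1) m i * w i)%N.

Lemma mwtD w m1 m2 : mwt w (m1 + m2)%MM = (mwt w m1 + mwt w m2)%N.
Proof. by rewrite /mwt -big_split; apply: eq_bigr => i _; rewrite mnmDE mulnDl. Qed.

Lemma mwtU w (j : 'I_n.+1) : mwt w U_(j)%MM = w j.
Proof.
rewrite /mwt (bigD1 j) //= mnm1E eqxx mul1n big1 ?addn0 // => i hi.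
by rewrite mnm1E eq_sym (negbTE hi).
Qed.

Lemma mwtMn w m c : mwt w (m *+ c)%MM = (mwt w m * c)%N.
Proof. by rewrite /mwt big_distrl; apply: eq_bigr => i _; rewrite mulmnE mulnAC. Qed.

Lemma mwt_addw w1 w2 m : mwt (fun i => w1 i + w2 i)%N m = (mwt w1 m + mwt w2 m)%N.
Proof. by rewrite /mwt -big_split; apply: eq_bigr => i _; rewrite mulnDr. Qed.

Lemma mwt_scalew c w m : mwt (fun i => c * w i)%N m = (c * mwt w m)%N.
Proof. by rewrite /mwt big_distrr; apply: eq_bigr => i _; rewrite mulnCA. Qed.

Lemma mwt_eqw w1 w2 m : (forall i : 'I_n.+1, w1 i = w2 i) -> mwt w1 m = mwt w2 m.
Proof. by move=> h; apply: eq_bigr => i _; rewrite h. Qed.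

Lemma mwt_lew w1 w2 m : (forall i : 'I_n.+1, w1 i <= w2 i)%N -> (mwt w1 m <= mwt w2 m)%N.
Proof. by move=> h; apply: leq_sum => i _; rewrite leq_mul2l h orbT. Qed.

Definition wdelta (j : nat) (i : nat) : nat := (i == j)%N.

Lemma mwt_delta (j : 'I_n.+1) m : mwt (wdelta j) m = m j.
Proof.
rewrite /mwt (bigD1 j) //= /wdelta eqxx muln1 big1 ?addn0 // => i hi.
by rewrite val_eqE (negbTE hi) muln0.
Qed.

Definition tdeg m : nat := mwt (wdelta 0) m.
Definition xdeg m : nat := mwt w3 m.
Definition xwt m : nat := mwt id m.

Lemma tdegE m : tdeg m = m ord0.
Proof. exact: (mwt_delta ord0). Qed.

Lemma mwt_w1 m : mwt w1 m = (tdeg m + xdeg m)%N.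
Proof. by rewrite -mwt_addw; apply: mwt_eqw => -[[|i] hi]. Qed.

Lemma mwt_w2 m :
  (mwt (w2 n) m + xwt m = (n - 2) * tdeg m + (2 * n - 1) * xdeg m)%N.
Proof.
rewrite -mwt_addw -!mwt_scalew -mwt_addw.
by apply: mwt_eqw => -[[|i] hi]; rewrite /w2 /wdelta /w3 /=; lia.
Qed.

(* Each x_j has weight between 1 and n. *)
Lemma xdeg_le_xwt m : (xdeg m <= xwt m)%N.
Proof. by apply: mwt_lew => -[[|i] hi] //. Qed.

Lemma xwt_le m : (xwt m <= n * xdeg m)%N.
Proof. by rewrite /xdeg -mwt_scalew; apply: mwt_lew => -[[|i] hi] /=; rewrite /w3 /=; lia. Qed.

(* Sharper forms: an x_j with j < n, resp. an x_j with j > 1, loses weight. *)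
Lemma xwt_add_le m (j : 'I_n.+1) : (0 < j < n)%N -> (xwt m + m j <= n * xdeg m)%N.
Proof.
move=> hj; rewrite -mwt_delta -mwt_addw /xdeg -mwt_scalew.
by apply: mwt_lew => -[[|i] hi]; rewrite /w3 /wdelta /=; case: j hj => j ? /=; lia.
Qed.

Lemma xdeg2_le m : (1 < n)%N -> (2 * xdeg m <= xwt m + m (inord 1))%N.
Proof.
move=> hn; rewrite -mwt_delta -mwt_addw /xdeg -mwt_scalew.
by apply: mwt_lew => -[[|i] hi]; rewrite /w3 /wdelta /= inordK //=; lia.
Qed.

Lemma mon_t_xE a j b : (0 < j <= n)%N ->
  mon_t_x n a j b = (U_(ord0) *+ a + U_(inord j) *+ b)%MM.
Proof.
move=> hj; apply/mnmP => i; rewrite mnmE mnmDE !mulmnE !mnm1E -!val_eqE /= inordK; last lia.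
by case: i => [[|i] hi] /=; [|rewrite eq_sym; case: eqP]; lia.
Qed.

Lemma mwt_mon w a j b : (0 < j <= n)%N ->
  mwt w (mon_t_x n a j b) = (w 0 * a + w j * b)%N.
Proof. by move=> hj; rewrite mon_t_xE // mwtD !mwtMn !mwtU /= inordK //; lia. Qed.

Lemma mon_tn_eq m : (0 < n)%N -> (forall j : 'I_n.+1, (0 < j < n)%N -> m j = 0%N) ->
  m = mon_t_x n (tdeg m) n (xdeg m).
Proof.
move=> n0 hz; have xdegE : xdeg m = m ord_max.
  rewrite -mwt_delta; apply: eq_bigr => -[[|i] hi] _; rewrite /w3 /wdelta /=.
    by rewrite eq_sym gtn_eqF.
  case: (ltnP i.+1 n) => hin; first by rewrite (hz (Ordinal hi)) ?mul0n.
  by have -> : (i.+1 == n) by lia.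
apply/mnmP => -[[|i] hi]; rewrite mnmE /= ?tdegE; first by congr (m _); apply: val_inj.
case: ifP => [/eqP ein|nin]; first by rewrite xdegE; congr (m _); apply: val_inj.
by rewrite (hz (Ordinal hi)) //=; move/negbT: nin; lia.
Qed.

Lemma lower_var_exists m : (xwt m < n * xdeg m)%N ->
  exists2 j : 'I_n.+1, (0 < j < n)%N & (0 < m j)%N.
Proof.
move=> hlt; case: (pickP (fun j : 'I_n.+1 => (0 < j < n)%N && (0 < m j)%N)).
  by move=> j /andP [hj hmj]; exists j.
move=> hnone; have n0 : (0 < n)%N by move: hlt; rewrite lt0n; apply: contraTneq => ->.
have hz (j : 'I_n.+1) : (0 < j < n)%N -> m j = 0%N.
  by move=> hj; move: (hnone j); rewrite hj /= lt0n => /negbFE /eqP.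
suff : xwt m = (n * xdeg m)%N by lia.
rewrite {1 2}(mon_tn_eq n0 hz) /xwt /xdeg !mwt_mon ?n0 ?leqnn //.
by rewrite /w3 /= (negbTE (lt0n_neq0 n0)); lia.
Qed.

(* m' arises from m by i moves x_j -> x_(j+1), each also multiplying by t^l. *)
Definition shifted (l i : nat) m m' : Prop :=
  [/\ tdeg m' = (tdeg m + i * l)%N, xdeg m' = xdeg m & xwt m' = (xwt m + i)%N].

Lemma shifted0 l m : shifted l 0 m m.
Proof. by split; rewrite ?addn0. Qed.

Lemma shiftedS l i m1 m2 m3 :
  shifted l i m1 m2 -> shifted l 1 m2 m3 -> shifted l i.+1 m1 m3.
Proof. by case=> e1 e2 e3 [f1 f2 f3]; split; rewrite ?f1 ?f2 ?f3 ?e1 ?e2 ?e3; lia. Qed.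

Lemma move_shifted l m (j : 'I_n.+1) : (0 < j < n)%N ->
  shifted l 1 (m + U_(j))%MM (m + U_(inord j.+1) + U_(ord0) *+ l)%MM.
Proof.
move=> hj; rewrite /shifted /tdeg /xdeg /xwt !mwtD !mwtMn !mwtU /= inordK; last lia.
by rewrite /wdelta /w3 /=; case: j hj => -[|j] ? //= _; split; lia.
Qed.
End MonomialStatistics.

(* The numerical core: a monomial with statistics (T, S, W) satisfying the bounds of
   Q_(a,b), moved i times to a monomial of x-weight W + i <= n S. *)
Section ExponentArithmetic.
Local Open Scope nat_scope.
Variables (n l a b T S W i : nat).
Hypotheses (hn : 3 <= n) (hl : 1 <= l) (hTa : T <= a) (hSb : S <= b)
  (hSW : S <= W) (hWi : W + i <= n * S).

Lemma steps_le : i <= (n - 1) * S.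
Proof.
have [n' en] : exists n', n = n'.+1 by exists n.-1; lia.
by move: hWi; rewrite en mulSn subn1 /=; lia.
Qed.

Lemma steps_mull_le : i * l <= (n - 1) * l * b.
Proof.
rewrite mulnAC; apply: leq_mul => //; apply: leq_trans steps_le _.
by rewrite leq_mul2l hSb orbT.
Qed.

Lemma tdeg_shift_le : T + i * l <= a + (n - 1) * l * b.
Proof. by apply: leq_add => //; apply: steps_mull_le. Qed.

Lemma tdeg_shift_eq : T + i * l = a + (n - 1) * l * b ->
  [/\ i = (n - 1) * b, T = a, S = b & W = b].
Proof.
move=> e; have hil := steps_mull_le.
have eil : i * l = (n - 1) * b * l by rewrite mulnAC; lia.
have ei : i = (n - 1) * b by apply/eqP; rewrite -(eqn_pmul2r hl) eil.
have eS : S = b.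
  apply/eqP; rewrite eqn_leq hSb /= -(@leq_pmul2l (n - 1)); first lia.
  by rewrite subn_gt0; apply: leq_trans hn.
split => //; first lia.
have [n' en] : exists n', n = n'.+1 by exists n.-1; lia.
by move: hWi; rewrite ei eS en mulSn subn1 /=; lia.
Qed.

Lemma w2_shift_le d2 : d2 + (W + i) = (n - 2) * (T + i * l) + (2 * n - 1) * S ->
  d2 <= (n - 2) * (a + (n - 1) * l * b) + (n - 1) * b.
Proof.
move=> e; have hi := steps_le; have [c en] : exists c, n = c.+2 by exists (n - 2); lia.
have e2 : n - 2 = c by lia.
have e1 : n - 1 = c.+1 by lia.
have e3 : 2 * n - 1 = 2 * c + 3 by lia.
rewrite e2 e1 e3 in e hi *.
have [d ecl] : exists d, c * l = d.+1 by exists (c * l).-1; rewrite prednK // muln_gt0; lia.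
have hd : i * d <= c.+1 * b * d.
  by apply: leq_mul => //; apply: leq_trans hi _; rewrite leq_mul2l hSb orbT.
have hTc : c * T <= c * a by rewrite leq_mul2l hTa orbT.
have hSc : c.+1 * S <= c.+1 * b by rewrite leq_mul2l hSb orbT.
have eL : c * (T + i * l) = c * T + i * (c * l) by lia.
have eR : c * (a + c.+1 * l * b) = c * a + c.+1 * b * (c * l) by lia.
rewrite eL ecl in e; rewrite eR ecl; lia.
Qed.
End ExponentArithmetic.

Section TlDSupport.
Variables (k : fieldType) (n : nat).
Local Notation M := ('X_{1..n.+1}).
Local Notation P := {mpoly k[n.+1]}.
Implicit Types (q : P) (m : M).

Lemma mcoeffXM (u : M) q m :
  ('X_[u] * q)@_m = if (u <= m)%MM then q@_(m - u)%MM else 0.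
Proof.
case: ifP => h; first by rewrite mulrC -[X in _@_X](submK h) addmC mcoeffMX.
apply/eqP; rewrite mcoeff_eq0 mulrC (perm_mem (msuppMX _ _)).
by apply/mapP => -[m' _ e]; move: h; rewrite e lem_addr.
Qed.

(* The contribution to the coefficient of m in D~ q of the term
   (n - j) x_(j+1) d/dx_j, which moves one x_j to x_(j+1). *)
Definition Dterm q m (j : 'I_n.+1) : k :=
  if (U_(inord j.+1) <= m)%MM
  then q@_(m - U_(inord j.+1) + U_(j))%MM *+ ((m - U_(inord j.+1))%MM j).+1 *+ (n - j)
  else 0.

Lemma Dtilde_coef q m : (Dtilde q)@_m = \sum_(j < n.+1 | (0 < j < n)%N) Dterm q m j.
Proof.
rewrite /Dtilde raddf_sum; apply: eq_bigr => j _.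
rewrite -mulrA mulr_natl raddfMn /= mcoeffXM /Dterm; case: ifP => _; last by rewrite mul0rn.
by rewrite mcoeff_deriv.
Qed.

Lemma tlD_coef l q m : (tlD l q)@_m =
  if (U_(ord0) *+ l <= m)%MM then (Dtilde q)@_(m - U_(ord0) *+ l)%MM else 0.
Proof. by rewrite /tlD mpolyXn mcoeffXM. Qed.

Lemma Dtilde_linear c q1 q2 : Dtilde (c *: q1 + q2) = c *: Dtilde q1 + Dtilde q2.
Proof.
rewrite /Dtilde scaler_sumr -big_split; apply: eq_bigr => j _.
by rewrite linearP mulrDr scalerAr.
Qed.

Lemma iter_tlD_linear l i c q1 q2 :
  iter i (tlD l) (c *: q1 + q2) = c *: iter i (tlD l) q1 + iter i (tlD l) q2.
Proof. by elim: i => //= i ->; rewrite /tlD Dtilde_linear mulrDr scalerAr. Qed.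

Lemma sum_neq0 (I : finType) (Pr : pred I) (f : I -> k) :
  \sum_(i | Pr i) f i != 0 -> exists2 i, Pr i & f i != 0.
Proof.
case: (pickP (fun i => Pr i && (f i != 0))) => [i /andP [] | hnone]; first by exists i.
by rewrite big1 ?eqxx // => i hi; move: (hnone i); rewrite hi => /negbFE /eqP.
Qed.

Lemma tlD_supp l q m : (tlD l q)@_m != 0 -> exists2 m0, q@_m0 != 0 & shifted l 1 m0 m.
Proof.
rewrite tlD_coef; case: ifP => hlm; last by rewrite eqxx.
rewrite Dtilde_coef => /sum_neq0 [j hj]; rewrite /Dterm; case: ifP => hjm; last by rewrite eqxx.
set mm := (m - U_(ord0) *+ l - U_(inord j.+1))%MM.
have -> : m = (mm + U_(inord j.+1) + U_(ord0) *+ l)%MM by rewrite /mm !submK.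
move=> hq; exists (mm + U_(j))%MM; last exact: move_shifted.
by apply: contraNneq hq => ->; rewrite !mul0rn.
Qed.

Lemma iter_tlD_supp l i q m : (iter i (tlD l) q)@_m != 0 ->
  exists2 m0, q@_m0 != 0 & shifted l i m0 m.
Proof.
elim: i m => [|i IH] m /=; first by exists m => //; apply: shifted0.
by case/tlD_supp => m1 /IH [m0 hm0 h01] h1; exists m0 => //; apply: shiftedS h1.
Qed.

Lemma eps_t_coef l q m : (eps_t l q)@_m =
  \sum_(i < (msize q * n).+1) ((i`!%:R)^-1 * (iter i (tlD l) q)@_m).
Proof. by rewrite /eps_t raddf_sum; apply: eq_bigr => i _; rewrite /= mcoeffZ. Qed.

Lemma eps_t_supp l q m : (eps_t l q)@_m != 0 ->
  exists i, exists2 m0, q@_m0 != 0 & shifted l i m0 m.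
Proof.
rewrite eps_t_coef => /sum_neq0 [i _]; rewrite mulf_eq0 negb_or => /andP [_].
by case/iter_tlD_supp => m0 hm0 hsh; exists i, m0.
Qed.
End TlDSupport.

Section Positivity.
Variables (k : fieldType) (n : nat).
Local Notation M := ('X_{1..n.+1}).
Local Notation P := {mpoly k[n.+1]}.
Implicit Types (q : P) (m : M).

Definition natk (x : k) : Prop := exists c : nat, x = c%:R.

Lemma natk_sum (I : finType) (Pr : pred I) (f : I -> k) :
  (forall i, Pr i -> natk (f i)) -> natk (\sum_(i | Pr i) f i).
Proof.
move=> h; apply: (big_ind natk) => //; first by exists 0%N.
by move=> _ _ [c1 ->] [c2 ->]; exists (c1 + c2)%N; rewrite natrD.
Qed.

Definition nat_coefs q : Prop := forall m, natk q@_m.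
Definition pos_coef q m : Prop := exists2 c : nat, (0 < c)%N & q@_m = c%:R.

Lemma nat_coefs_X m0 : nat_coefs 'X_[m0].
Proof. by move=> m; rewrite mcoeffX; exists (m0 == m). Qed.

(* D~ has natural coefficients, so each contribution Dterm is natural. *)
Lemma natk_Dterm q m j : nat_coefs q -> natk (Dterm q m j).
Proof.
rewrite /Dterm => hq; case: ifP => _; last by exists 0%N.
by have [c ->] := hq (m - U_(inord j.+1) + U_(j))%MM; eexists; rewrite -!mulrnA.
Qed.

Lemma nat_coefs_iter l i q : nat_coefs q -> nat_coefs (iter i (tlD l) q).
Proof.
elim: i => //= i IH hq m; rewrite tlD_coef; case: ifP => _; last by exists 0%N.
by rewrite Dtilde_coef; apply: natk_sum => j _; apply/natk_Dterm/IH.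
Qed.

(* A move from a positive coefficient lands on a positive coefficient: the other
   contributions to the coefficient formula are natural, so nothing cancels. *)
Lemma pos_coef_move l q m (j : 'I_n.+1) : nat_coefs q -> (0 < j < n)%N ->
  pos_coef q (m + U_(j))%MM ->
  pos_coef (tlD l q) (m + U_(inord j.+1) + U_(ord0) *+ l)%MM.
Proof.
move=> hq hj [c c0 ec]; rewrite /pos_coef tlD_coef lem_addl addmK Dtilde_coef (bigD1 j) //=.
have [d ->] : natk (\sum_(i < n.+1 | (0 < i < n)%N && (i != j))
                     Dterm q (m + U_(inord j.+1))%MM i).
  by apply: natk_sum => i _; apply: natk_Dterm.
rewrite {1}/Dterm lem_addl addmK ec.
exists (c * (m j).+1 * (n - j) + d)%N; last by rewrite natrD -!mulrnA mulnA.
by rewrite ltn_addr // !muln_gt0 c0 subn_gt0; case/andP: hj.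
Qed.

(* From t^T x_1^S, any i <= (n - 1) S moves can be made with positive coefficient,
   pushing x-weight one step at a time while some x_j, j < n, is left. *)
Lemma pos_coef_chain l m0 i : xwt m0 = xdeg m0 -> (i <= (n - 1) * xdeg m0)%N ->
  exists2 m, shifted l i m0 m & pos_coef (iter i (tlD l) ('X_[m0] : P)) m.
Proof.
move=> hw0; elim: i => [|i IH] hi.
  by exists m0; [apply: shifted0 | exists 1%N; rewrite //= mcoeffX eqxx].
have [m hm hpos] := IH (ltnW hi); case: (hm) => _ eS eW.
have [j hj hmj] : exists2 j : 'I_n.+1, (0 < j < n)%N & (0 < m j)%N.
  have : (0 < (n - 1) * xdeg m0)%N by apply: leq_trans hi.
  rewrite muln_gt0 subn_gt0 => /andP [n1 _].
  have en : (n * xdeg m0 = (n - 1) * xdeg m0 + xdeg m0)%N.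
    by rewrite -mulSnr subn1 prednK // ltnW.
  by apply: lower_var_exists; rewrite eW eS hw0 en; lia.
have em : m = (m - U_(j) + U_(j))%MM by rewrite submK // lep1mP -lt0n.
exists (m - U_(j) + U_(inord j.+1) + U_(ord0) *+ l)%MM.
  by apply: shiftedS hm _; rewrite {1}em; apply: move_shifted.
rewrite iterS; apply: pos_coef_move => //; first exact/nat_coefs_iter/nat_coefs_X.
by rewrite -em.
Qed.
End Positivity.

Section LeadingTerm.
Variables (k : fieldType) (n l a b : nat) (p : {mpoly k[n.+1]}).
Hypotheses (hn : (3 <= n)%N) (hl : (1 <= l)%N).
Hypotheses (hdeg : (wdeg w3 p <= b)%N) (hlt : lt_is p (mon_t_x n a 1 b)).
Local Notation a' := (a + (n - 1) * l * b)%N.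
Local Notation mst := (mon_t_x n a 1 b).
Local Notation mtop := (mon_t_x n a' n b).

Lemma mst_stats : [/\ tdeg mst = a, xdeg mst = b & xwt mst = b].
Proof.
have h1n : (0 < 1 <= n)%N by lia.
by rewrite /tdeg /xdeg /xwt !(mwt_mon _ _ _ h1n) /wdelta /w3 /=; split; lia.
Qed.

Lemma supp_bounds m : p@_m != 0 ->
  [/\ (tdeg m <= a)%N, (xdeg m <= b)%N &
      (tdeg m = a -> xdeg m = b -> xwt m = b -> m = mst)].
Proof.
rewrite -mcoeff_msupp => hm; have [_ hlex] := hlt.
have hS : (xdeg m <= b)%N by move/bigmax_leqP_seq: hdeg; apply.
have [T_mst S_mst _] := mst_stats.
case: (m =P mst) => [->|ne]; first by split; rewrite ?T_mst ?S_mst.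
have [[[|[|i]] hi] [hbef hlti]] := hlex m hm ne; rewrite mnmE /= in hlti.
- by rewrite tdegE (_ : ord0 = Ordinal hi); [split; lia | apply: val_inj].
- have e0 := hbef ord0 isT; rewrite mnmE /= in e0.
  split => //; first by rewrite tdegE e0.
  move=> _ eS eW; have := xdeg2_le m (ltnW hn).
  by rewrite (_ : inord 1 = Ordinal hi) ?eS ?eW; [lia | apply: val_inj; rewrite /= inordK].
- by [].
Qed.

Lemma shifted_bounds i m m' : p@_m != 0 -> shifted l i m m' ->
  [/\ (tdeg m' <= a')%N, (mwt w1 m' <= a' + b)%N,
      (mwt (w2 n) m' <= (n - 2) * a' + (n - 1) * b)%N &
      (tdeg m' = a' -> [/\ i = ((n - 1) * b)%N, m = mst & m' = mtop])].
Proof.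
move=> hm [eT eS eW]; have [hT hS hmst] := supp_bounds hm.
have hSW := xdeg_le_xwt m.
have hWi : (xwt m + i <= n * xdeg m)%N by rewrite -eW -eS xwt_le.
have hTm' := tdeg_shift_le hn hl hT hS hSW hWi.
split.
- by rewrite eT.
- by rewrite mwt_w1 eT eS; have := steps_le hn hl hT hS hSW hWi; lia.
- by apply: (w2_shift_le hn hl hT hS hSW hWi); rewrite -eW -eT -eS mwt_w2.
rewrite eT => /(tdeg_shift_eq hn hl hT hS hSW hWi) [ei eTa eSb eWb].
split => //; first exact: hmst.
have hz (j : 'I_n.+1) : (0 < j < n)%N -> m' j = 0%N.
  by move=> hj; have := xwt_add_le m' hj; rewrite eW eS eWb eSb ei; lia.
by rewrite [LHS](mon_tn_eq (ltnW (ltnW hn)) hz) eT eS eTa eSb ei mulnAC.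
Qed.

Lemma tdeg_mtop : tdeg mtop = a'.
Proof.
have hnn : (0 < n <= n)%N by rewrite leqnn andbT; apply: leq_trans hn.
by rewrite /tdeg mwt_mon // /wdelta /= (negbTE (lt0n_neq0 (ltnW (ltnW hn)))); lia.
Qed.

Lemma shifted_to_top i m : p@_m != 0 -> shifted l i m mtop ->
  i = ((n - 1) * b)%N /\ m = mst.
Proof. by move=> hm /(shifted_bounds hm) [_ _ _ /(_ tdeg_mtop) []]. Qed.

Lemma steps_in_range : ((n - 1) * b < (msize p * n).+1)%N.
Proof.
have [[hmst _] [T_mst S_mst _]] := (hlt, mst_stats).
have := msize_mdeg_lt hmst; rewrite mdegE.
rewrite (eq_bigr (fun i => mst i * w1 i)%N) => [|i _]; last by rewrite muln1.
rewrite -/(mwt w1 mst) mwt_w1 T_mst S_mst ltnS => hsize.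
by rewrite mulnC leq_mul ?leq_subr //; lia.
Qed.

(* In characteristic zero the coefficient of t^a' x_n^b in exp(t^l D~) p is
   p_(t^a x_1^b) times the positive coefficient of t^a' x_n^b in
   (t^l D~)^((n-1) b) (t^a x_1^b), divided by ((n-1) b)!; all other terms vanish. *)
Lemma eps_coef_top : [pchar k] =i pred0 -> (eps_t l p)@_mtop != 0.
Proof.
move=> hk; have [[hmst _] [T_mst S_mst W_mst]] := (hlt, mst_stats).
have hp_mst : p@_mst != 0 by rewrite -mcoeff_msupp.
have natf_neq0 c : (0 < c)%N -> (c%:R : k) != 0 by rewrite (pcharf0P _).1 // -lt0n.
set N := ((n - 1) * b)%N.
rewrite eps_t_coef (bigD1 (Ordinal steps_in_range)) //= big1 ?addr0 => [|i hi]; last first.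
  suff -> : (iter i (tlD l) p)@_mtop = 0 by rewrite mulr0.
  apply: contraNeq hi => /iter_tlD_supp [m hm /(shifted_to_top hm) [ei _]].
  by apply/eqP/val_inj.
rewrite mulf_neq0 ?invr_eq0 ?natf_neq0 ?fact_gt0 //.
have ep : p = p@_mst *: 'X_[mst] + (p - p@_mst *: 'X_[mst]) by rewrite addrC subrK.
rewrite [in iter _ _ p]ep iter_tlD_linear mcoeffD mcoeffZ.
have -> : (iter N (tlD l) (p - p@_mst *: 'X_[mst]))@_mtop = 0.
  apply/eqP; apply: contraT => /iter_tlD_supp [m]; rewrite mcoeffB mcoeffZ mcoeffX.
  have [<-|ne] := eqVneq mst m; first by rewrite mulr1 subrr eqxx.
  by rewrite mulr0 subr0 => hm /(shifted_to_top hm) [_ em]; rewrite em eqxx in ne.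
rewrite addr0 mulf_neq0 //.
have [|m hsh [c c0 ec]] := pos_coef_chain k l (i := N) (etrans W_mst (esym S_mst)).
  by rewrite S_mst.
have [eT _ _] := hsh.
have [_ _ _ /(_ _) [|_ _ em]] := shifted_bounds hp_mst hsh.
  by rewrite eT T_mst /N mulnAC.
by rewrite -em ec natf_neq0.
Qed.
End LeadingTerm.

Theorem lemma5p3 (k : fieldType) (hk : [pchar k] =i pred0) (n : nat)
  (hn : (3 <= n)%N) (l : nat) (hl : (1 <= l)%N) (a b : nat)
  (ha : (1 <= a)%N) (hb : (1 <= b)%N) (p : {mpoly k[n.+1]}) :
  inQab a b p -> inPab (a + (n - 1) * l * b) b (eps_t l p).
Proof.
case=> _ hdeg hlt; set a' := (a + (n - 1) * l * b)%N.
have htop := eps_coef_top hn hl hdeg hlt hk.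
have hsupp m' : m' \in msupp (eps_t l p) ->
    [/\ (tdeg m' <= a')%N, (mwt w1 m' <= a' + b)%N,
        (mwt (w2 n) m' <= (n - 2) * a' + (n - 1) * b)%N &
        (tdeg m' = a' -> m' = mon_t_x n a' n b)].
  rewrite mcoeff_msupp => /eps_t_supp [i [m hm hsh]].
  by have [? ? ? htop'] := shifted_bounds hn hl hdeg hlt hm hsh; split => // /htop' [].
split.
- by apply: contraNneq htop => ->; rewrite mcoeff0.
- by apply/bigmax_leqP_seq => m' /hsupp [].
- by apply/bigmax_leqP_seq => m' /hsupp [].
split; first by rewrite mcoeff_msupp.
move=> m' /hsupp [hT _ _ htop'] ne; exists ord0; split => [j|]; first by rewrite ltn0.
by rewrite mnmE /= -tdegE ltn_neqAle hT andbT; apply/eqP => /htop'.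
Qed.
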